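(* Let $\kappa_3,\kappa_4$ be constants and let $y$ be a $C^3$ function on an open interval of $r>0$ on which $\kappa_3r^2+\kappa_4\neq 0$. Then $y$ satisfies the third-order equation $$(\kappa_3r^2+\kappa_4)r^3y'''+(\kappa_3r^2-2\kappa_4)r^2y''-(\kappa_3r^2+2\kappa_4)ry'+8\kappa_4y=8$$ if and only if there exists a constant $\kappa_2$ such that $y$ satisfies the second-order equation $$(\kappa_3r^2+\kappa_4)y''+\kappa_3ry'-\frac{2\kappa_4}{r^2}y+\frac{2}{r^2}=2\kappa_2r^2 .$$
   Context: Primes denote derivatives with respect to $r$. (In the paper, $y=b^2$ is the metric function of a static spherically symmetric vacuum solution of conformal Killing gravity, the second-order equation arises from the conformal Killing parametrization and the third-order one from Harada's original field equations.) *)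

From Stdlib Require Import Reals.
From Coquelicot Require Import Coquelicot.
Open Scope R_scope.

Definition in_interval (a b : Rbar) (r : R) : Prop :=
  Rbar_lt a r /\ Rbar_lt r b.

Definition C3_on (a b : Rbar) (y : R -> R) : Prop :=
  forall r, in_interval a b r ->
    ex_derive_n y 1 r /\ ex_derive_n y 2 r /\ ex_derive_n y 3 r /\
    continuous (Derive_n y 3) r.

Definition third_order_eq (k3 k4 : R) (y : R -> R) (r : R) : Prop :=
  (k3 * r ^ 2 + k4) * r ^ 3 * Derive_n y 3 r
  + (k3 * r ^ 2 - 2 * k4) * r ^ 2 * Derive_n y 2 r
  - (k3 * r ^ 2 + 2 * k4) * r * Derive_n y 1 r
  + 8 * k4 * y r = 8.

Definition second_order_eq (k2 k3 k4 : R) (y : R -> R) (r : R) : Prop :=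
  (k3 * r ^ 2 + k4) * Derive_n y 2 r + k3 * r * Derive_n y 1 r
  - 2 * k4 / r ^ 2 * y r + 2 / r ^ 2 = 2 * k2 * r ^ 2.

(* Dividing the left-hand side of the second-order equation by r^2 gives a
   function whose derivative is (third-order left-hand side - 8) / r^5 for
   r > 0.  On an interval, the third-order equation therefore says exactly
   that this function is constant, and calling the constant 2 k2 is the
   second-order equation. *)

From Stdlib Require Import Reals Lra Classical.
From Coquelicot Require Import Coquelicot.
Open Scope R_scope.

Lemma in_interval_gt0 (a b : Rbar) (r : R) :
  Rbar_le (Finite 0) a -> in_interval a b r -> 0 < r.
Proof. intros Ha0 [Har _]. exact (Rbar_le_lt_trans _ _ _ Ha0 Har). Qed.

Lemma in_interval_between (a b : Rbar) (u v t : R) :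
  in_interval a b u -> in_interval a b v -> u <= t <= v -> in_interval a b t.
Proof.
  intros [Hau _] [_ Hvb] [Hut Htv]. split.
  - exact (Rbar_lt_le_trans _ (Finite u) (Finite t) Hau Hut).
  - exact (Rbar_le_lt_trans (Finite t) (Finite v) _ Htv Hvb).
Qed.

Lemma is_derive_zero_const_on (a b : Rbar) (f : R -> R) (u v : R) :
  (forall t, in_interval a b t -> is_derive f t 0) ->
  in_interval a b u -> in_interval a b v -> f u = f v.
Proof.
  intros Hf0.
  assert (Hlt : forall u v, in_interval a b u -> in_interval a b v -> u < v ->
                  f u = f v).
  { intros u' v' Hu Hv Huv. apply eq_is_derive; [|exact Huv].
    intros t Ht. exact (Hf0 t (in_interval_between a b u' v' t Hu Hv Ht)). }
  intros Hu Hv. destruct (Rtotal_order u v) as [Huv|[<-|Hvu]].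
  - exact (Hlt u v Hu Hv Huv).
  - reflexivity.
  - symmetry. exact (Hlt v u Hv Hu Hvu).
Qed.

Lemma is_derive_zero_ex_const_on (a b : Rbar) (f : R -> R) :
  (forall t, in_interval a b t -> is_derive f t 0) ->
  exists c, forall t, in_interval a b t -> f t = c.
Proof.
  intros Hf0. destruct (classic (exists r0, in_interval a b r0)) as [[r0 Hr0]|Hempty].
  - exists (f r0). intros t Ht. exact (is_derive_zero_const_on a b f t r0 Hf0 Ht Hr0).
  - exists 0. intros t Ht. exfalso. exact (Hempty (ex_intro _ t Ht)).
Qed.

Lemma is_derive_const_on (a b : Rbar) (f : R -> R) (c r : R) :
  (forall t, in_interval a b t -> f t = c) ->
  in_interval a b r -> is_derive f r 0.
Proof.
  intros Hfc [Har Hrb].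
  apply (is_derive_ext_loc (fun _ => c)); [|exact (is_derive_const c r)].
  apply (locally_interval _ r a b Har Hrb).
  intros t Hat Htb. symmetry. apply Hfc. split; assumption.
Qed.

Definition second_order_lhs (k3 k4 : R) (y : R -> R) (r : R) : R :=
  (k3 * r ^ 2 + k4) * Derive_n y 2 r + k3 * r * Derive_n y 1 r
  - 2 * k4 / r ^ 2 * y r + 2 / r ^ 2.

Definition third_order_lhs (k3 k4 : R) (y : R -> R) (r : R) : R :=
  (k3 * r ^ 2 + k4) * r ^ 3 * Derive_n y 3 r
  + (k3 * r ^ 2 - 2 * k4) * r ^ 2 * Derive_n y 2 r
  - (k3 * r ^ 2 + 2 * k4) * r * Derive_n y 1 r
  + 8 * k4 * y r.

Definition first_integral (k3 k4 : R) (y : R -> R) (r : R) : R :=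
  second_order_lhs k3 k4 y r / r ^ 2.

Lemma second_order_eq_first_integral (k2 k3 k4 : R) (y : R -> R) (r : R) :
  r <> 0 ->
  second_order_eq k2 k3 k4 y r <-> first_integral k3 k4 y r = 2 * k2.
Proof.
  intros Hr. unfold second_order_eq, first_integral.
  fold (second_order_lhs k3 k4 y r).
  split; intros E.
  - rewrite E. field. exact Hr.
  - replace (second_order_lhs k3 k4 y r)
      with (second_order_lhs k3 k4 y r / r ^ 2 * r ^ 2) by (field; exact Hr).
    rewrite E. reflexivity.
Qed.

Lemma third_order_eq_residual (k3 k4 : R) (y : R -> R) (r : R) :
  r <> 0 ->
  third_order_eq k3 k4 y r <-> (third_order_lhs k3 k4 y r - 8) / r ^ 5 = 0.
Proof.
  intros Hr. unfold third_order_eq. fold (third_order_lhs k3 k4 y r).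
  split; intros E.
  - rewrite E. field. exact Hr.
  - apply Rminus_diag_uniq.
    replace (third_order_lhs k3 k4 y r - 8)
      with ((third_order_lhs k3 k4 y r - 8) / r ^ 5 * r ^ 5) by (field; exact Hr).
    rewrite E. ring.
Qed.

Lemma is_derive_first_integral (k3 k4 : R) (y : R -> R) (r : R) :
  0 < r -> ex_derive_n y 1 r -> ex_derive_n y 2 r -> ex_derive_n y 3 r ->
  is_derive (first_integral k3 k4 y) r ((third_order_lhs k3 k4 y r - 8) / r ^ 5).
Proof.
  intros Hr Hy1 Hy2 Hy3. simpl in Hy1, Hy2, Hy3.
  unfold first_integral, second_order_lhs, third_order_lhs. simpl Derive_n.
  auto_derive.
  - repeat split; auto; apply Rgt_not_eq; nra.
  - field. lra.
Qed.

Theorem proposition7 (k3 k4 : R) (a b : Rbar) (y : R -> R)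
  (Ha0 : Rbar_le (Finite 0) a) (Hab : Rbar_lt a b)
  (Hy : C3_on a b y)
  (Hnz : forall r, in_interval a b r -> k3 * r ^ 2 + k4 <> 0) :
  (forall r, in_interval a b r -> third_order_eq k3 k4 y r) <->
  (exists k2 : R, forall r, in_interval a b r -> second_order_eq k2 k3 k4 y r).
Proof.
  pose (G := first_integral k3 k4 y).
  assert (Hr0 : forall r, in_interval a b r -> r <> 0)
    by (intros r Hr; apply Rgt_not_eq; exact (in_interval_gt0 a b r Ha0 Hr)).
  assert (HG' : forall r, in_interval a b r ->
            is_derive G r ((third_order_lhs k3 k4 y r - 8) / r ^ 5)).
  { intros r Hr. destruct (Hy r Hr) as [Hy1 [Hy2 [Hy3 _]]].
    exact (is_derive_first_integral k3 k4 y r (in_interval_gt0 a b r Ha0 Hr)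
             Hy1 Hy2 Hy3). }
  split.
  - intros H3.
    assert (HG0 : forall r, in_interval a b r -> is_derive G r 0).
    { intros r Hr.
      rewrite <- (proj1 (third_order_eq_residual k3 k4 y r (Hr0 r Hr)) (H3 r Hr)).
      exact (HG' r Hr). }
    destruct (is_derive_zero_ex_const_on a b G HG0) as [c Hc].
    exists (c / 2). intros r Hr.
    apply (second_order_eq_first_integral _ _ _ _ _ (Hr0 r Hr)).
    fold G. rewrite (Hc r Hr). field.
  - intros [k2 H2] r Hr.
    assert (HGc : forall t, in_interval a b t -> G t = 2 * k2).
    { intros t Ht.
      exact (proj1 (second_order_eq_first_integral _ _ _ _ _ (Hr0 t Ht)) (H2 t Ht)). }
    apply (third_order_eq_residual k3 k4 y r (Hr0 r Hr)).
    rewrite <- (is_derive_unique _ _ _ (HG' r Hr)).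
    exact (is_derive_unique _ _ _ (is_derive_const_on a b G _ r HGc Hr)).
Qed.
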